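(* If $M_G$ is a connected mixed graph whose matrix $N(M_G)$ has rank $2$, then its underlying graph $G$ is a complete bipartite graph.
   Context: A mixed graph $M_G$ is obtained from a finite simple graph $G$ (its underlying graph) by orienting the edges of some subset of $E(G)$; it is connected if $G$ is. With $\omega=\frac{1+\mathbf{i}\sqrt3}{2}$, $N(M_G)$ has $(u,v)$-entry $\omega$ if $\overrightarrow{uv}$ is an arc, $\bar\omega$ if $\overrightarrow{vu}$ is an arc, $1$ for an undirected edge $\{u,v\}$, $0$ otherwise. *)

From mathcomp Require Import all_boot all_order all_algebra all_field.
Set Implicit Arguments. Unset Strict Implicit. Unset Printing Implicit Defensive.
Import Order.TTheory GRing.Theory Num.Theory.
Local Open Scope ring_scope.

Definition simple_graph (n : nat) (adj : rel 'I_n) : Prop :=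
  symmetric adj /\ irreflexive adj.

(* A mixed graph: a simple graph [adj] together with a set of arcs [arc];
   arc u v means the edge {u,v} is oriented from u to v. *)
Definition mixed_graph (n : nat) (adj arc : rel 'I_n) : Prop :=
  simple_graph adj /\
  (forall u v, arc u v -> adj u v) /\
  (forall u v, arc u v -> ~~ arc v u).

Definition connected_graph (n : nat) (adj : rel 'I_n) : Prop :=
  forall u v, connect adj u v.

Definition omega6 : algC := (1 + 'i * sqrtC 3%:R) / 2%:R.

Definition Nmat (n : nat) (adj arc : rel 'I_n) : 'M[algC]_n :=
  \matrix_(u, v)
    (if arc u v then omega6
     else if arc v u then omega6^*
     else if adj u v then 1 else 0).

Definition complete_bipartite (n : nat) (adj : rel 'I_n) : Prop :=
  exists A : {set 'I_n},
    [/\ A != set0, ~: A != set0 &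
        forall u v, adj u v = ((u \in A) != (v \in A))].

From mathcomp Require Import all_boot all_order all_algebra all_field.
From mathcomp Require Import ring.
Set Implicit Arguments. Unset Strict Implicit. Unset Printing Implicit Defensive.
Import Order.TTheory GRing.Theory Num.Theory.
Local Open Scope ring_scope.

(* A matrix of rank 2 has no nonsingular 3x3 submatrix.  The nonzero entries
   of N are sixth roots of unity, so a triangle u v w gives the principal
   minor 2 Re (N_uv N_vw N_wu), which vanishes for no sixth root of unity, and
   an induced path x y z t gives the minor on rows x y z and columns y z t,
   which is triangular with determinant N_xy N_yz N_zt <> 0.  In a graph with
   neither triangles nor induced paths on four vertices, the ends of any walk
   of length three are adjacent; with connectedness this makes the
   neighbourhood of one end of an edge and its complement the two sides of a
   complete bipartite graph. *)

Lemma det_mx33 (R : comNzRingType) (A : 'M[R]_3) : \det A =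
  A 0 0 * (A 1 1 * A 2 2 - A 1 2 * A 2 1)
  - A 0 1 * (A 1 0 * A 2 2 - A 1 2 * A 2 0)
  + A 0 2 * (A 1 0 * A 2 1 - A 1 1 * A 2 0).
Proof.
pose a (i j : nat) := A (inord i) (inord j).
have Ea x y : A x y = a (val x) (val y) by rewrite /a !inord_val.
rewrite (expand_det_row _ 0) !big_ord_recl big_ord0 /cofactor.
rewrite !(expand_det_row _ 0) !big_ord_recl !big_ord0 /cofactor !det_mx11 !mxE !Ea /=.
rewrite /bump /= !addn0 !add0n (_ : (1 %% 3 = 1)%N) // (_ : ((1 + 1) %% 3 = 2)%N) //.
rewrite !addn1 !expr0 !expr1 expr2.
ring.
Qed.

Lemma mxsubE (R : Type) m n p q (f : 'I_p -> 'I_m) (g : 'I_q -> 'I_n)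
    (A : 'M[R]_(m, n)) i j :
  mxsub f g A i j = A (f i) (g j).
Proof. exact: mxE. Qed.

Lemma mxrank_mxsub (F : fieldType) m n p q (f : 'I_p -> 'I_m) (g : 'I_q -> 'I_n)
    (A : 'M[F]_(m, n)) :
  (\rank (mxsub f g A) <= \rank A)%N.
Proof.
rewrite -[A in mxsub _ _ A]mul1mx mxsub_mul.
apply: leq_trans (mxrankM_maxr _ _) _.
rewrite -[A in colsub _ A]mulmx1 -mulmx_colsub.
exact: mxrankM_maxl.
Qed.

Lemma det_mxsub_eq0 (F : fieldType) m n k (f : 'I_k -> 'I_m) (g : 'I_k -> 'I_n)
    (A : 'M[F]_(m, n)) :
  (\rank A < k)%N -> \det (mxsub f g A) = 0.
Proof.
move=> rankA; apply/eqP; apply: contraTT rankA; rewrite -unitfE -unitmxE -leqNgt.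
by move/mxrank_unit <-; exact: mxrank_mxsub.
Qed.

Section SixthRoots.
Variable C : numClosedFieldType.
Implicit Types z : C.

Lemma unity_root_mulC_conj n z : (0 < n)%N -> n.-unity_root z -> z * z^* = 1.
Proof.
move=> n_gt0 /unity_rootP zn1.
have /eqP norm_z1 : `|z| == 1 by rewrite -(pexpr_eq1 n_gt0) // -normrX zn1 normr1.
by rewrite -normCK norm_z1 expr1n.
Qed.

Lemma unity_rootM n (a b : C) :
  n.-unity_root a -> n.-unity_root b -> n.-unity_root (a * b).
Proof.
move=> /unity_rootP an1 /unity_rootP bn1.
by apply/unity_rootP; rewrite exprMn an1 bn1 mulr1.
Qed.

(* [z + z^*] is twice the real part of [z]: a purely imaginary [z] on the unit
   circle is [i] or [-i], whose sixth power is [-1]. *)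
Lemma sixth_root_addC_conj_neq0 z : 6.-unity_root z -> z + z^* != 0.
Proof.
move=> z6; have zz1 : z * z^* = 1 by exact: unity_root_mulC_conj z6.
apply: contraTneq z6 => zDz0.
have z2 : z ^+ 2 = -1.
  by apply/eqP; rewrite -addr_eq0 -zz1 -mulrDr zDz0 mulr0.
rewrite unity_rootE (_ : 6 = 2 * 3)%N // exprM z2 -signr_odd /= expr1.
by rewrite -subr_eq0 -opprD oppr_eq0 -[_ + 1]/(2%:R) pnatr_eq0.
Qed.

End SixthRoots.

Lemma omega6_unity_root : 6.-unity_root omega6.
Proof.
set s : algC := 'i * sqrtC 3%:R.
have s2 : s ^+ 2 = - 3%:R by rewrite exprMn sqrCi sqrtCK mulN1r.
have omega_sq : omega6 ^+ 2 = omega6 - 1.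
  apply/eqP; rewrite -subr_eq0.
  have -> : omega6 ^+ 2 - (omega6 - 1) = (s ^+ 2 + 3%:R) / 4%:R.
    by rewrite /omega6 -/s; field.
  by rewrite s2 addNr mul0r.
have omega_cube : omega6 ^+ 3 = -1.
  by rewrite exprS omega_sq mulrBr mulr1 -expr2 omega_sq addrAC subrr add0r.
by apply/unity_rootP; rewrite (_ : 6 = 3 * 2)%N // exprM omega_cube sqrrN expr1n.
Qed.

Definition triangle_free (T : Type) (adj : rel T) : Prop :=
  forall u v w, adj u v -> adj v w -> adj u w -> False.

Definition induced_P4_free (T : Type) (adj : rel T) : Prop :=
  forall x y z t, adj x y -> adj y z -> adj z t ->
    ~~ adj x z -> ~~ adj y t -> ~~ adj x t -> False.

Section NmatMinors.
Variables (n : nat) (adj arc : rel 'I_n).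
Hypotheses (adj_sym : symmetric adj) (adj_irr : irreflexive adj).
Hypotheses (arc_adj : subrel arc adj) (arc_asym : forall u v, arc u v -> ~~ arc v u).

Local Notation N := (Nmat adj arc).

Lemma Nmat_eq0 u v : ~~ adj u v -> N u v = 0.
Proof.
move=> /negbTE nuv; rewrite mxE.
have /negbTE -> : ~~ arc u v by apply: contraFN nuv => /arc_adj.
have /negbTE -> : ~~ arc v u by rewrite adj_sym in nuv; apply: contraFN nuv => /arc_adj.
by rewrite nuv.
Qed.

Lemma Nmat_diag u : N u u = 0.
Proof. by rewrite Nmat_eq0 ?adj_irr. Qed.

Lemma Nmat_conj_sym u v : N v u = (N u v)^*.
Proof.
rewrite !mxE; case: ifP => [/arc_asym/negbTE -> | _]; first by rewrite conjCK.
case: ifP => // _.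
by rewrite adj_sym; case: ifP; rewrite ?rmorph1 ?rmorph0.
Qed.

Lemma Nmat_unity_root u v : adj u v -> 6.-unity_root (N u v).
Proof.
move=> uv; rewrite mxE.
case: ifP => _; first exact: omega6_unity_root.
case: ifP => _; first exact: rmorph_unity_root omega6_unity_root.
by rewrite uv unity_rootE expr1n.
Qed.

Lemma Nmat_neq0 u v : adj u v -> N u v != 0.
Proof.
move/Nmat_unity_root; apply: contraTneq => ->.
by rewrite unity_rootE expr0n eq_sym oner_eq0.
Qed.

Lemma adj_of_Nmat_neq0 : N != 0 -> exists u v, adj u v.
Proof.
case/matrix0Pn=> u [v Nuv]; exists u, v.
by apply: contraNT Nuv => /Nmat_eq0 ->.
Qed.

Hypothesis rankN_lt3 : (\rank N < 3)%N.

Lemma Nmat_triangle_free : triangle_free adj.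
Proof.
move=> u v w uv vw uw; pose f (i : 'I_3) := nth u [:: u; v; w] i.
have := det_mxsub_eq0 f f rankN_lt3; apply/eqP.
rewrite det_mx33 !mxsubE /f /= !Nmat_diag.
rewrite (Nmat_conj_sym u v) (Nmat_conj_sym u w) (Nmat_conj_sym v w).
set a := N u v; set b := N u w; set c := N v w.
have -> : 0 * (0 * 0 - c * c^*) - a * (a^* * 0 - c * b^*) + b * (a^* * c^* - 0 * b^*)
   = a * c * b^* + (a * c * b^*)^* by rewrite !rmorphM /= conjCK; ring.
apply: sixth_root_addC_conj_neq0.
rewrite !unity_rootM ?Nmat_unity_root //.
exact: rmorph_unity_root (Nmat_unity_root uw).
Qed.

Lemma Nmat_induced_P4_free : induced_P4_free adj.
Proof.
move=> x y z t xy yz zt nxz nyt nxt.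
pose f (i : 'I_3) := nth x [:: x; y; z] i.
pose g (i : 'I_3) := nth x [:: y; z; t] i.
have := det_mxsub_eq0 f g rankN_lt3; apply/eqP.
rewrite det_mx33 !mxsubE /f /g /= !Nmat_diag (Nmat_eq0 nxz) (Nmat_eq0 nyt) (Nmat_eq0 nxt).
by rewrite !mul0r !subr0 !addr0 !mulf_neq0 ?Nmat_neq0.
Qed.

End NmatMinors.

Section TriangleAndP4Free.
Variables (T : finType) (adj : rel T).
Hypotheses (adj_sym : symmetric adj) (no_triangle : triangle_free adj).
Hypothesis no_P4 : induced_P4_free adj.

Lemma adj_walk3 a b c d : adj a b -> adj b c -> adj c d -> adj a d.
Proof.
move=> ab bc cd; apply/negP => nad; apply: (no_P4 ab bc cd).
- by apply/negP => /(no_triangle ab bc).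
- by apply/negP => /(no_triangle bc cd).
- exact/negP.
Qed.

Hypothesis adj_connected : forall x y, connect adj x y.

Lemma adj_or_adj_edge u v z : adj u v -> adj u z || adj v z.
Proof.
move=> uv; have vu : adj v u by rewrite adj_sym.
pose S := [pred x | adj u x || adj v x].
have S_closed : closed adj S.
  apply: intro_closed; first exact: sym_connect_sym.
  move=> x y xy; have yx : adj y x by rewrite adj_sym.
  rewrite !inE ![adj _ x]adj_sym => /orP[xu | xv].
  - by rewrite [adj v y]adj_sym (adj_walk3 yx xu uv) orbT.
  - by rewrite [adj u y]adj_sym (adj_walk3 yx xv vu).
have := closed_connect S_closed (adj_connected u z).
by rewrite !inE vu orbT => <-.
Qed.

End TriangleAndP4Free.

Lemma complete_bipartite_of_triangle_P4_free n (adj : rel 'I_n) :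
  symmetric adj -> irreflexive adj -> (forall x y, connect adj x y) ->
  triangle_free adj -> induced_P4_free adj -> (exists u v, adj u v) ->
  complete_bipartite adj.
Proof.
move=> adj_sym adj_irr conn no_triangle no_P4 [u [v uv]].
have vu : adj v u by rewrite adj_sym.
have cover z : adj u z || adj v z by exact: adj_or_adj_edge.
exists [set x | adj v x]; split.
- by apply/set0Pn; exists u; rewrite inE.
- by apply/set0Pn; exists v; rewrite !inE adj_irr.
move=> x y; rewrite !inE.
have := cover x; have := cover y.
case vx: (adj v x); case vy: (adj v y); rewrite /= ?orbF => uy ux.
- by apply/negbTE/negP => xy; apply: no_triangle vx xy vy.
- by rewrite adj_sym in vx; apply: adj_walk3 vx vu uy.
- by rewrite adj_sym; rewrite adj_sym in vy; apply: adj_walk3 vy vu ux.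
- by apply/negbTE/negP => xy; apply: no_triangle ux xy uy.
Qed.

Theorem theorem5p7 (n : nat) (adj arc : rel 'I_n) :
  mixed_graph adj arc -> connected_graph adj ->
  \rank (Nmat adj arc) = 2%N ->
  complete_bipartite adj.
Proof.
move=> [[adj_sym adj_irr] [arc_adj arc_asym]] conn rankN.
have rankN_lt3 : (\rank (Nmat adj arc) < 3)%N by rewrite rankN.
apply: complete_bipartite_of_triangle_P4_free => //.
- exact: Nmat_triangle_free rankN_lt3.
- exact: Nmat_induced_P4_free rankN_lt3.
- by apply: (adj_of_Nmat_neq0 adj_sym arc_adj); rewrite -mxrank_eq0 rankN.
Qed.
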